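(* Let $n,r$ be integers with $n\ge r+2\ge 2$. For each $i\in\{1,\dots,n-1\}$, the subgroup of $K$ generated by $x^{(i)}_1,\dots,x^{(i)}_r$ is a free group. The subgroup of $K$ generated by $x^{(1)}_1,x^{(2)}_2,\dots,x^{(r)}_r$ is a free group.
   Context: For $\alpha\in\{1,\dots,n\}$ let $F^{(\alpha)}$ be the free group on $a^{(\alpha)}_1,\dots,a^{(\alpha)}_r$, let $\psi\colon F^{(1)}\times\cdots\times F^{(n)}\to\mathbb Z^r$ send each $a^{(\alpha)}_j$ to the standard basis vector $e_j$, and $K=\ker\psi$. For $\alpha\in\{1,\dots,n-1\}$, $j\in\{1,\dots,r\}$, $x^{(\alpha)}_j=a^{(\alpha)}_j(a^{(n)}_j)^{-1}\in K$. *)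

From mathcomp Require Import all_boot ssralg ssrint.

(** Letters of the free group F on a_1..a_r: (j, false) = a_{j+1}, (j, true) = a_{j+1}^{-1}. *)
Definition letter (r : nat) := ('I_r * bool)%type.

Definition flip (r : nat) (l : letter r) : letter r := (l.1, ~~ l.2).

Definition cons_red (r : nat) (l : letter r) (s : seq (letter r)) : seq (letter r) :=
  match s with
  | y :: s' => if y == flip r l then s' else l :: s
  | [::] => [:: l]
  end.

Definition reduce (r : nat) (s : seq (letter r)) : seq (letter r) :=
  foldr (cons_red r) [::] s.

(** The group F^(1) x ... x F^(n): an element is a family (indexed by 'I_n,
    factor alpha = 1..n corresponding to the ordinal alpha-1) of reduced words. *)
Definition PG (n r : nat) := {ffun 'I_n -> seq (letter r)}.

Definition pmul (n r : nat) (g h : PG n r) : PG n r :=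
  [ffun b => reduce r (g b ++ h b)].
Definition pinv (n r : nat) (g : PG n r) : PG n r :=
  [ffun b => reduce r (rev (map (flip r) (g b)))].
Definition pone (n r : nat) : PG n r := [ffun => [::]].

(** a^(alpha)_(j+1), alpha in {1..n} (1-based), j : 'I_r (0-based) *)
Definition agen (n r : nat) (alpha : nat) (j : 'I_r) : PG n r :=
  [ffun b : 'I_n => if eqn (nat_of_ord b).+1 alpha then [:: (j, false)] else [::]].

Definition xgen (n r : nat) (alpha : nat) (j : 'I_r) : PG n r :=
  pmul n r (agen n r alpha j) (pinv n r (agen n r n j)).

(** psi : F^(1) x ... x F^(n) -> Z^r, and K = ker psi (for reference) *)
Definition psi (n r : nat) (g : PG n r) (j : 'I_r) : int :=
  \sum_(b < n) \sum_(l <- g b | l.1 == j) (if l.2 then (-1)%R else 1%R).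
Definition inK (n r : nat) (g : PG n r) : Prop := forall j, psi n r g j = 0%R.

Definition eval_word (n r : nat) (I : Type) (B : I -> PG n r) (w : seq (I * bool)) : PG n r :=
  foldr (fun ib acc => pmul n r (if ib.2 then pinv n r (B ib.1) else B ib.1) acc) (pone n r) w.

Fixpoint reducedP (I : Type) (w : seq (I * bool)) : Prop :=
  match w with
  | x :: ((y :: _) as t) => ~ (y.1 = x.1 /\ y.2 = ~~ x.2) /\ reducedP I t
  | _ => True
  end.

Definition gen_subgroup (n r : nat) (J : Type) (x : J -> PG n r) : PG n r -> Prop :=
  fun g => exists w : seq (J * bool), g = eval_word n r J x w.

Definition is_free_subgroup (n r : nat) (H : PG n r -> Prop) : Prop :=
  exists (I : Type) (B : I -> PG n r),
    (forall i, H (B i)) /\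
    (forall g, H g -> exists w : seq (I * bool), g = eval_word n r I B w) /\
    (forall w : seq (I * bool), reducedP I w -> w <> [::] -> eval_word n r I B w <> pone n r).

(* Projection onto the last factor F^(n) sends x^(alpha)_j (alpha < n) to (a^(n)_j)^-1.
   Hence a reduced word in x^(alpha_1)_1, ..., x^(alpha_r)_r is sent to the same
   reduced word in the free generators of F^(n), which is nontrivial when the word is. *)
From mathcomp Require Import all_boot.

Set Implicit Arguments.
Unset Strict Implicit.

Section FreeReduction.
Variable r : nat.

Fixpoint is_reduced (s : seq (letter r)) : bool :=
  match s with
  | x :: ((y :: _) as t) => (y != flip r x) && is_reduced t
  | _ => true
  end.

Lemma is_reduced_behead l s : is_reduced (l :: s) -> is_reduced s.
Proof. by case: s => [|y s] //= /andP[]. Qed.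

Lemma is_reduced_cons_red l s : is_reduced s -> is_reduced (cons_red r l s).
Proof.
case: s => [|y s] //= red_ys; case: ifP => [_ | /= -> //].
exact: is_reduced_behead red_ys.
Qed.

Lemma is_reduced_reduce s : is_reduced (reduce r s).
Proof. by elim: s => [|l s IHs] //=; apply: is_reduced_cons_red. Qed.

Lemma reduce_id s : is_reduced s -> reduce r s = s.
Proof.
elim: s => [|l s IHs] //= red_ls.
rewrite (IHs (is_reduced_behead red_ls)).
by case: s red_ls {IHs} => [|y s] //= /andP[/negbTE ->].
Qed.

Lemma reduce_idem s : reduce r (reduce r s) = reduce r s.
Proof. exact/reduce_id/is_reduced_reduce. Qed.

End FreeReduction.

Section CoordinateProjection.
Variables (n r : nat) (I : Type) (B : I -> PG n r).
Variables (c : 'I_n) (e : I -> 'I_r) (s : I -> bool).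
Hypothesis B_c : forall i, B i c = [:: (e i, s i)].

Definition signed_letter (ib : I * bool) : letter r := (e ib.1, s ib.1 (+) ib.2).

Lemma eval_word_coord w :
  eval_word n r I B w c = reduce r (map signed_letter w).
Proof.
elim: w => [|[i b] w IHw] /=; first by rewrite ffunE.
rewrite ffunE IHw /signed_letter /=.
by case: b; rewrite ?ffunE B_c /= ?addbT ?addbF reduce_idem.
Qed.

Lemma is_reduced_signed_word w :
  injective e -> reducedP I w -> is_reduced (map signed_letter w).
Proof.
move=> inj_e; elim: w => [|x [|y w] IHw] //= [not_inv red_yw].
move: (IHw red_yw) => /= -> {IHw}; rewrite andbT.
apply: contra_notN not_inv => /eqP[/inj_e eq_xy].
rewrite eq_xy => flip_xy; split => //.
by move: flip_xy; case: (s x.1); case: (x.2); case: (y.2).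
Qed.

Lemma gen_subgroup_free :
  injective e -> (forall i b, is_reduced (B i b)) ->
  is_free_subgroup n r (gen_subgroup n r I B).
Proof.
move=> inj_e red_B; exists I, B; split; [|split] => //.
  move=> i; exists [:: (i, false)]; apply/ffunP => b /=.
  by rewrite !ffunE cats0 reduce_id.
move=> w red_w w_nil eval_w1.
have := eval_word_coord w; rewrite eval_w1 ffunE reduce_id.
  by case: w w_nil {red_w eval_w1}.
exact: is_reduced_signed_word.
Qed.

End CoordinateProjection.

Lemma xgen_last m r alpha (j : 'I_r) :
  alpha != m.+1 -> xgen m.+1 r alpha j ord_max = [:: (j, true)].
Proof.
by move=> alpha_n; rewrite !ffunE /= !eqnE eqxx eq_sym (negbTE alpha_n).
Qed.

Lemma is_reduced_xgen n r alpha j b : is_reduced (xgen n r alpha j b).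
Proof. by rewrite ffunE; apply: is_reduced_reduce. Qed.

Lemma xgen_free m r (alpha : 'I_r -> nat) :
  (forall j, alpha j != m.+1) ->
  is_free_subgroup m.+1 r (gen_subgroup m.+1 r 'I_r (fun j => xgen m.+1 r (alpha j) j)).
Proof.
move=> alpha_n; apply: (@gen_subgroup_free _ _ _ _ ord_max id (fun=> true)) => //.
  by move=> j; apply: xgen_last.
by move=> j b; apply: is_reduced_xgen.
Qed.

Theorem lemma3p1 (n r : nat) (hnr : 2 <= r + 2 <= n) :
  (forall i : nat, 1 <= i <= n - 1 ->
     is_free_subgroup n r (gen_subgroup n r 'I_r (fun j : 'I_r => xgen n r i j))) /\
  is_free_subgroup n r (gen_subgroup n r 'I_r (fun j : 'I_r => xgen n r j.+1 j)).
Proof.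
case: n hnr => [|m]; first by rewrite addn2.
move=> /andP[_]; rewrite addn2 ltnS subn1 /= => r_m; split.
  move=> i /andP[_ i_m]; apply: (xgen_free (alpha := fun=> i)) => _.
  by rewrite neq_ltn ltnS i_m.
apply: xgen_free => j; rewrite eqSS neq_ltn.
by rewrite (leq_trans (ltn_ord j)) // ltnW.
Qed.
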